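(* Consider a partially observed Markov decision process whose latent state at time $t$ is a vector $\mathbf{s}_t=(s_{1,t},\dots,s_{d,t})$, with observations $o_t$, actions $a_t$, rewards $r_t$ and discounted cumulative reward $R_t=\sum_{t'\ge t}\gamma^{t'-t}r_{t'}$, generated according to the causal graph described in the context. Assume that the graphical representation corresponding to this environment model is Markov and faithful to the distribution of the measured data. Then for every state dimension $s_{i,t}$ of $\mathbf{s}_t$: (1) $s_{i,t}\in s^{ar}_t$ iff $s_{i,t}\not\perp\!\!\!\perp R_t\mid a_{t-1:t},s^r_{t-1}$ and $s_{i,t}\not\perp\!\!\!\perp a_{t-1}\mid \mathbf{s}_{t-1}$; (2) $s_{i,t}\in s^{\bar a r}_t$ iff $s_{i,t}\not\perp\!\!\!\perp R_t\mid a_{t-1:t},s^r_{t-1}$ and $s_{i,t}\perp\!\!\!\perp a_{t-1}\mid \mathbf{s}_{t-1}$; (3) $s_{i,t}\in s^{a\bar r}_t$ iff $s_{i,t}\perp\!\!\!\perp R_t\mid a_{t-1:t},s^r_{t-1}$ and $s_{i,t}\not\perp\!\!\!\perp a_{t-1}\mid \mathbf{s}_{t-1}$; (4) $s_{i,t}\in s^{\bar a\bar r}_t$ iff $s_{i,t}\perp\!\!\!\perp R_t\mid a_{t-1:t},s^r_{t-1}$ and $s_{i,t}\perp\!\!\!\perp a_{t-1}\mid \mathbf{s}_{t-1}$.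
   Context: The latent state is partitioned into four blocks $\mathbf{s}_t=(s^{ar}_t,s^{\bar a r}_t,s^{a\bar r}_t,s^{\bar a\bar r}_t)$ according to the causal graph over time: (i) $s^{ar}_t$: dimensions with an incoming edge from $a_{t-1}$ and a directed path to $r_t$; (ii) $s^{\bar a r}_t$: no incoming edge from $a_{t-1}$ but a directed path to $r_t$; (iii) $s^{a\bar r}_t$: an incoming edge from $a_{t-1}$ and no directed path to $r_t$; (iv) $s^{\bar a\bar r}_t$: neither. Write $s^r_t:=(s^{ar}_t,s^{\bar a r}_t)$, $s^{\bar r}_t:=(s^{a\bar r}_t,s^{\bar a\bar r}_t)$. The graph has the following edges (and no others among these variables): $a_{t-1}\to s^{ar}_t$ and $a_{t-1}\to s^{a\bar r}_t$; $s^r_{t-1}\to s^{ar}_t$ and $s^r_{t-1}\to s^{\bar a r}_t$; $\mathbf{s}_{t-1}\to s^{a\bar r}_t$ and $\mathbf{s}_{t-1}\to s^{\bar a\bar r}_t$; $\mathbf{s}_t\to o_t$; $s^r_t\to r_t$; and possibly $s^r_t\to a_t$. There are no instantaneous causal effects among latent state variables; actions do not directly affect observations. $\gamma\in[0,1]$ is the discount factor and $a_{t-1:t}=(a_{t-1},a_t)$. ''Markov'' means every d-separation in the graph implies the corresponding conditional independence; ''faithful'' means there are no conditional independences other than those implied by the Markov condition. *)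

From mathcomp Require Import ssreflect ssrfun ssrbool eqtype ssrnat fintype.
From Stdlib Require Import Reals Relations.
From Stdlib Require List.

Set Implicit Arguments.
Unset Strict Implicit.
Unset Printing Implicit Defensive.
Local Open Scope list_scope.

(* Sd i t : latent state dimension s_{i,t};  A t : action a_t;
   O t : observation o_t;  Rw t : reward r_t;
   Ret t : discounted cumulative reward R_t = sum_{t'>=t} gamma^(t'-t) r_{t'}. *)
Inductive node (d : nat) : Type :=
| Sd of 'I_d & nat
| A of nat
| O of nat
| Rw of nat
| Ret of nat.

Arguments A {d}. Arguments O {d}. Arguments Rw {d}. Arguments Ret {d}.

Section Graph.
Variable d : nat.
Notation node := (node d).
Implicit Types (G : node -> node -> Prop) (X Y Z : node -> Prop).

Definition adj G (u v : node) : Prop := G u v \/ G v u.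

Definition anc_of G Z (v : node) : Prop :=
  exists w, clos_refl_trans node G v w /\ Z w.

Fixpoint is_walk G (p : list node) : Prop :=
  match p with
  | x :: ((y :: _) as q) => adj G x y /\ is_walk G q
  | _ => True
  end.

Fixpoint active_interior G Z (p : list node) : Prop :=
  match p with
  | x :: ((y :: z :: _) as q) =>
      ((G x y /\ G z y) -> anc_of G Z y) /\
      (~ (G x y /\ G z y) -> ~ Z y) /\
      active_interior G Z q
  | _ => True
  end.

Definition d_connected G X Y Z : Prop :=
  exists (x : node) (p : list node),
    X x /\ Y (List.last p x) /\ List.NoDup (x :: p) /\
    is_walk G (x :: p) /\ active_interior G Z (x :: p).

Definition d_separated G X Y Z : Prop := ~ d_connected G X Y Z.

Definition disjoint3 X Y Z : Prop :=
  (forall v, X v -> Y v -> False) /\ (forall v, X v -> Z v -> False) /\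
  (forall v, Y v -> Z v -> False).

(* An independence model  indep X Y Z  ("X is independent of Y given Z"
   in the distribution of the measured data) is Markov / faithful w.r.t. G. *)
Definition markov G (indep : (node -> Prop) -> (node -> Prop) -> (node -> Prop) -> Prop) :=
  forall X Y Z, disjoint3 X Y Z -> d_separated G X Y Z -> indep X Y Z.

Definition faithful G (indep : (node -> Prop) -> (node -> Prop) -> (node -> Prop) -> Prop) :=
  forall X Y Z, disjoint3 X Y Z -> indep X Y Z -> d_separated G X Y Z.

Definition in_a G (i : 'I_d) (t : nat) : Prop :=
  match t with 0 => False | t'.+1 => G (A t') (Sd i t) end.

Definition in_r G (i : 'I_d) (t : nat) : Prop :=
  clos_trans node G (Sd i t) (Rw t).

Definition in_ar G i t := in_a G i t /\ in_r G i t.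
Definition in_nar G i t := ~ in_a G i t /\ in_r G i t.
Definition in_anr G i t := in_a G i t /\ ~ in_r G i t.
Definition in_nanr G i t := ~ in_a G i t /\ ~ in_r G i t.

(* Edges allowed by the context ("these edges and no others"):
   a_{t-1} -> s^{ar}_t, s^{a r-bar}_t;  s^r_{t-1} -> s^r_t;  s_{t-1} -> s^{r-bar}_t;
   s_t -> o_t;  s^r_t -> r_t;  s^r_t -> a_t;  r_{t'} -> R_t (t' >= t, nonzero weight). *)
Definition allowed_edge G (gamma : R) (u v : node) : Prop :=
  match u, v with
  | A t, Sd _ t' => t' = t.+1
  | Sd j t, Sd i t' => t' = t.+1 /\ (in_r G i t' -> in_r G j t)
  | Sd _ t, O t' => t' = t
  | Sd _ t, Rw t' => t' = t
  | Sd i t, A t' => t' = t /\ in_r G i t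
  | Rw t', Ret t => (t <= t')%N /\ (t' = t \/ gamma <> 0%R)
  | _, _ => False
  end.

Definition env_graph G (gamma : R) : Prop :=
  (forall u v, G u v -> allowed_edge G gamma u v) /\
  (forall t t', G (Rw t') (Ret t) <-> ((t <= t')%N /\ (t' = t \/ gamma <> 0%R))).

Definition single (x : node) : node -> Prop := fun v => v = x.

(* a_{t-1:t} together with s^r_{t-1}, for current time t.+1 *)
Definition cond_R G (t : nat) : node -> Prop :=
  fun v => v = A t \/ v = A t.+1 \/ exists j, v = Sd j t /\ in_r G j t.

(* s_{t-1} (all dimensions), for current time t.+1 *)
Definition cond_a (t : nat) : node -> Prop :=
  fun v => exists j, v = Sd j t.

End Graph.

(* Under the Markov and faithfulness assumptions each (in)dependence in the
   statement is the corresponding d-connection, so both conditions are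
   graphical.  The edge a_t -> s_{i,t+1} is itself a path that is active given
   s_t.  Without it, an active walk from s_{i,t+1} either moves forward into
   the strict future of a_t, which is closed under edges and misses s_t (so the
   walk can never turn there at a collider), or steps back into s_t as a
   non-collider and is blocked; hence it never reaches a_t.  Likewise, a
   directed path from s_{i,t+1} to r_{t+1} can only be the edge itself, and
   s_{i,t+1} -> r_{t+1} -> R_{t+1} is active given a_{t:t+1}, s^r_t.  Without
   it, every active walk stays in the history up to time t or in the
   edge-closed set of non-reward future states, and neither contains R_{t+1}.
   The discount factor matters only through the edge r_{t+1} -> R_{t+1}. *)

From mathcomp Require Import ssreflect ssrfun ssrbool eqtype ssrnat fintype.
From mathcomp Require Import zify.
From Stdlib Require Import Reals Relations Lia Classical.
From Stdlib Require List.

Set Implicit Arguments.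
Unset Strict Implicit.
Unset Printing Implicit Defensive.
Local Open Scope list_scope.

Lemma indep_iff_d_separated d (G : node d -> node d -> Prop) indep X Y Z :
  markov G indep -> faithful G indep -> disjoint3 X Y Z ->
  (indep X Y Z <-> d_separated G X Y Z).
Proof. by move=> hM hF hXYZ; split; [exact: hF | exact: hM]. Qed.

Lemma d_connected_edge d (G : node d -> node d -> Prop) Z x y :
  x <> y -> adj G x y -> d_connected G (single x) (single y) Z.
Proof.
move=> xy Gxy; exists x, (y :: nil); do 2!split=> //.
split; last done.
by constructor; [case=> // /esym | repeat constructor].
Qed.

Lemma d_connected_chain d (G : node d -> node d -> Prop) (Z : node d -> Prop) x y z :
  List.NoDup (x :: y :: z :: nil) -> G x y -> G y z -> ~ G z y -> ~ Z y ->
  d_connected G (single x) (single z) Z.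
Proof.
move=> uniq Gxy Gyz nGzy nZy; exists x, (y :: z :: nil); do 3!split=> //.
split; first by split; [left | split; [left |]].
by split=> [[_ /nGzy] //|].
Qed.

Section Confinement.

Variables (d : nat) (G : node d -> node d -> Prop) (Z Q P : node d -> Prop).

Hypothesis G_asym : forall u v, G u v -> G v u -> False.
Hypothesis Q_closed : forall u v, G u v -> Q u -> Q v.
Hypothesis Q_Z : forall v, Q v -> ~ Z v.

Lemma closed_not_anc v : Q v -> ~ anc_of G Z v.
Proof.
move=> Qv [w [vw Zw]]; apply: (Q_Z _ Zw).
by elim: vw Qv => [x y /Q_closed | // | x y z _ IHxy _ IHyz /IHxy /IHyz].
Qed.

Definition confined (u v : node d) : Prop := (G u v /\ Q v) \/ P v \/ (Z v /\ G v u).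

Hypothesis P_step :
  forall y z, P y -> adj G y z -> (G y z -> ~ Z y) -> confined y z.

Lemma confined_step x y z :
  confined x y -> adj G y z ->
  (G x y /\ G z y -> anc_of G Z y) -> (~ (G x y /\ G z y) -> ~ Z y) ->
  confined y z.
Proof.
move=> cxy yz collider noncollider.
case: cxy => [[Gxy Qy] | [Py | [Zy Gyx]]].
- case: yz => [Gyz | Gzy]; first by left; split; last exact: Q_closed Gyz Qy.
  by case: (closed_not_anc Qy (collider (conj Gxy Gzy))).
- apply: P_step => // Gyz; apply: noncollider => -[_ /(G_asym Gyz)] [].
- by case: (noncollider (fun '(conj Gxy _) => G_asym Gxy Gyx) Zy).
Qed.

Lemma active_walk_confined w p x y :
  is_walk G (x :: y :: p) -> active_interior G Z (x :: y :: p) ->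
  confined x y -> exists u, confined u (List.last (y :: p) w).
Proof.
elim: p x y => [|z p IH] x y; first by move=> _ _ cxy; exists x.
move=> [_ walk] [collider [noncollider active]] cxy.
apply: (IH y z walk active); exact: confined_step cxy (proj1 walk) collider noncollider.
Qed.

Lemma d_separated_of_confined x (Y : node d -> Prop) :
  ~ Y x -> (forall y, adj G x y -> confined x y) ->
  (forall y, Y y -> ~ Q y /\ ~ P y /\ ~ Z y) ->
  d_separated G (single x) Y Z.
Proof.
move=> nYx start avoid [_ [[|y p] [-> [Yend [_ [walk active]]]]]]; first exact: nYx.
have [u cuy] := active_walk_confined x walk active (start y (proj1 walk)).
have [nQ [nP nZ]] := avoid _ Yend.
by case: cuy => [[_ /nQ] | [/nP | [/nZ]]].
Qed.

End Confinement.

Section EnvironmentGraph.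

Variables (d : nat) (G : node d -> node d -> Prop) (gamma : R).

Hypothesis G_allowed : forall u v, G u v -> allowed_edge G gamma u v.

Lemma env_asym u v : G u v -> G v u -> False.
Proof.
move=> /G_allowed + Gvu; move: (G_allowed Gvu) => {Gvu}.
by case: u => [j t|t|t|t|t]; case: v => [k t'|t'|t'|t'|t'] //=; intuition lia.
Qed.

Lemma ret_childless t v : ~ G (Ret t) v.
Proof. by move/G_allowed; case: v. Qed.

(* R_t has parents r_t' for all t' >= t, so no rank fits it; being a sink it
   needs none. *)
Definition rank (v : node d) : nat :=
  match v with Sd _ t => 2 * t | A t | O t | Rw t => (2 * t).+1 | Ret _ => 0 end.

Definition is_ret (v : node d) : bool := if v is Ret _ then true else false.

Lemma edge_rank u v : G u v -> ~~ is_ret v -> rank u < rank v.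
Proof.
move/G_allowed.
by case: u => [j t|t|t|t|t]; case: v => [k t'|t'|t'|t'|t'] //=; intuition lia.
Qed.

Lemma clos_trans_rank u v : clos_trans _ G u v -> ~~ is_ret v -> rank u < rank v.
Proof.
move=> uv; elim: (clos_trans_tn1 _ _ _ _ uv) => {uv} [y Guy | y z Gyz _ IH] nRet.
  exact: edge_rank.
have nRy : ~~ is_ret y by case: y Gyz {IH} => // t /ret_childless.
by have := IH nRy; have := edge_rank Gyz nRet; lia.
Qed.

Lemma in_r_edge i t : in_r G i t <-> G (Sd i t) (Rw t).
Proof.
split; last exact: t_step.
move=> /(clos_trans_tn1 _ _ _ _) path; move Ew: (Rw t) path => w path.
case: path Ew => [// -> | u {}w Gu /(clos_tn1_trans _ _ _ _) path Ew] //; subst w.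
move: (G_allowed Gu); case: u path {Gu} => // k t' /clos_trans_rank /(_ isT) /= + tt'.
by rewrite tt'; lia.
Qed.

Definition after_action t (v : node d) : Prop :=
  match v with Sd _ t' | A t' => t < t' | _ => True end.

Lemma after_action_closed t u v : G u v -> after_action t u -> after_action t v.
Proof.
move/G_allowed.
by case: u => [j t1|t1|t1|t1|t1]; case: v => [k t2|t2|t2|t2|t2] //=; intuition lia.
Qed.

Lemma in_a_d_connected t i :
  G (A t) (Sd i t.+1) <->
  d_connected G (single (Sd i t.+1)) (single (A t)) (cond_a t).
Proof.
split=> [GAs | conn]; first exact: d_connected_edge (or_intror GAs).
apply: NNPP => nGAs; move: conn.
apply: (d_separated_of_confined (Q := after_action t) (P := fun _ => False))
  => [|||//|//|y|y ->].
- exact: env_asym.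
- exact: after_action_closed.
- by move=> v + [j ev]; rewrite ev /=; lia.
- case=> [Gsy | Gys].
    by left; split=> //; apply: (after_action_closed Gsy) => /=.
  move: (G_allowed Gys); case: y Gys => [j t'|t'|t'|t'|t'] //= Gys.
    by case=> /succn_inj tt' _; subst t'; right; right; split=> //; exists j.
  by move=> /succn_inj tt'; subst t'; case: nGAs.
- by split=> [/=|]; [lia | split=> // -[]].
Qed.

Definition nonreward_future t (v : node d) : Prop :=
  match v with
  | Sd k t' => t < t' /\ ~ in_r G k t'
  | O _ => True
  | Ret t' => t' <= t
  | _ => False
  end.

Definition history t (v : node d) : Prop :=
  match v with Sd _ t' | Rw t' => t' <= t | A t' => t' < t | _ => False end.

Lemma nonreward_future_closed t u v :
  G u v -> nonreward_future t u -> nonreward_future t v.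
Proof.
move=> Guv; move: (G_allowed Guv).
case: u Guv => [k t1|t1|t1|t1|t1]; case: v => [k' t2|t2|t2|t2|t2] //=.
- by move=> _ [e reward_back] [lt_t nr]; split; [lia | move/reward_back].
- by move=> _ [_ r] [_ []].
- by move=> Gsr e [_]; subst t2; apply; apply: t_step.
Qed.

Lemma history_step t y z :
  history t y -> adj G y z -> (G y z -> ~ cond_R G t y) ->
  confined G (cond_R G t) (nonreward_future t) (history t) y z.
Proof.
move=> hy [Gyz | Gzy] out_free; last first.
  move: (G_allowed Gzy) hy; case: y {out_free Gzy} => [j t1|t1|t1|t1|t1] //;
  by case: z => [k t2|t2|t2|t2|t2] //= al hy; right; left => /=; move: al hy;
    intuition lia.
have nZy := out_free Gyz; move: (G_allowed Gyz) hy.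
case: y {out_free} Gyz nZy => [j t1|t1|t1|t1|t1] //;
  case: z => [k t2|t2|t2|t2|t2] //= Gyz nZy.
- case=> [e back le].
  case: (ltnP t1 t) => [lt_t | ge_t]; first by right; left => /=; lia.
  have et : t1 = t by lia.
  subst; left; split=> //=; split; first lia.
  by move/back => r; apply: nZy; right; right; exists j.
- case=> [e r le].
  case: (ltnP t1 t) => [lt_t | ge_t]; first by right; left => /=; lia.
  have et : t1 = t by lia.
  by subst; case: nZy; right; right; exists j.
- by left.
- by move=> e le; right; left => /=; lia.
- by move=> e lt_t; right; left => /=; lia.
- by case=> le _ le'; left; split=> //=; lia.
Qed.

Hypothesis G_return : forall t, G (Rw t) (Ret t).

Lemma in_r_d_connected t i :
  in_r G i t.+1 <->
  d_connected G (single (Sd i t.+1)) (single (Ret t.+1)) (cond_R G t).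
Proof.
split=> [/in_r_edge Gsr |].
  apply: (d_connected_chain _ Gsr (G_return _) (@ret_childless _ _)).
    by repeat constructor => /=; intuition discriminate.
  by case=> [|[|[j []]]].
move=> conn; apply: NNPP => nr; move: conn.
apply: (d_separated_of_confined (Q := nonreward_future t) (P := history t))
  => [|||||y|y ->].
- exact: env_asym.
- exact: nonreward_future_closed.
- by move=> v NFv Zv; case: Zv NFv => [-> | [-> | [j [-> _]]]] //= -[]; lia.
- move=> y z; exact: history_step.
- by [].
- case=> [Gsy | Gys].
    by left; split=> //; apply: (nonreward_future_closed Gsy) => /=.
  move: (G_allowed Gys); case: y Gys => [j t'|t'|t'|t'|t'] //= Gys.
    by case=> /succn_inj tt' _; subst t'; right; left => /=.
  by move=> /succn_inj tt'; subst t'; right; right; split=> //; left.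
- by split=> [/=|]; [lia | split=> // -[|[|[j []]]]].
Qed.

End EnvironmentGraph.

Theorem proposition3 (d : nat) (G : node d -> node d -> Prop) (gamma : R)
  (hgamma : (0 <= gamma <= 1)%R)
  (indep : (node d -> Prop) -> (node d -> Prop) -> (node d -> Prop) -> Prop)
  (hG : env_graph G gamma)
  (hM : markov G indep) (hF : faithful G indep)
  (t : nat) (i : 'I_d) :
  let s := Sd i t.+1 in
  (in_ar G i t.+1 <->
     ~ indep (single s) (single (Ret t.+1)) (cond_R G t) /\
     ~ indep (single s) (single (A t)) (@cond_a d t)) /\
  (in_nar G i t.+1 <->
     ~ indep (single s) (single (Ret t.+1)) (cond_R G t) /\
     indep (single s) (single (A t)) (@cond_a d t)) /\
  (in_anr G i t.+1 <->
     indep (single s) (single (Ret t.+1)) (cond_R G t) /\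
     ~ indep (single s) (single (A t)) (@cond_a d t)) /\
  (in_nanr G i t.+1 <->
     indep (single s) (single (Ret t.+1)) (cond_R G t) /\
     indep (single s) (single (A t)) (@cond_a d t)).
Proof.
case: hG => G_allowed G_ret_iff.
have G_return t' : G (Rw t') (Ret t') by apply/G_ret_iff; split; [exact: leqnn | left].
have disj_a : disjoint3 (single (Sd i t.+1)) (single (A t)) (cond_a t).
  split; [|split] => v -> //; first by case=> j [_]; lia.
  by case.
have disj_R : disjoint3 (single (Sd i t.+1)) (single (Ret t.+1)) (cond_R G t).
  split; [|split] => v -> //; first by case=> [|[|[j [[_ e] _]]]] //; lia.
  by case=> [|[|[j []]]].
rewrite /= /in_ar /in_nar /in_anr /in_nanr /=.
rewrite (indep_iff_d_separated hM hF disj_a) (indep_iff_d_separated hM hF disj_R).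
rewrite /d_separated -(in_a_d_connected G_allowed) -(in_r_d_connected G_allowed G_return).
by case: (classic (G (A t) (Sd i t.+1))); case: (classic (in_r G i t.+1)); tauto.
Qed.
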